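(* Consider the multi-product pricing model in the context, with a given positive vector $f\in\mathbb{R}^n$, exogenously given $q_{\min}>0$ and $q_{\max}=e^{k}q_{\min}$ for some $k>0$, and suppose the firm restricts prices to $p_i\in[q_{\min}f_i,\,q_{\max}f_i]$ for all $i\in N$ (for every customer type). Let $\bar{\mathcal{R}}$ be the maximum personalized profit subject to these constraints and $\mathcal{R}^f:=\max_{q\in[q_{\min},q_{\max}]}R(qf)$. If A0 and A1 hold, then $\bar{\mathcal{R}}\le (1+k)\,\mathcal{R}^f$.
   Context: Products $N=\{1,\dots,n\}$, customer types $M=\{1,\dots,m\}$, non-negative demand functions $d_{ij}(p)$ for product $i$ and type $j$ at price vector $p\in\mathbb{R}^n_{\ge0}$; type profit $R_j(p)=\sum_i p_id_{ij}(p)$; weights $\theta_j>0$ with $\sum_j\theta_j=1$; $R(p)=\sum_j\theta_jR_j(p)$. In the constrained setting, let $\mathcal{P}:=\{p: q_{\min}f_i\le p_i\le q_{\max}f_i,\ i\in N\}$, $\mathcal{R}^*_j:=\max_{p\in\mathcal{P}}R_j(p)$ and $\bar{\mathcal{R}}:=\sum_j\theta_j\mathcal{R}^*_j$. Assumption A0: for each $j$, the maximum of $R_j$ over $\mathcal{P}$ is attained at a price vector $\bar p^j$ with positive finite components; these are fixed. Define $\delta_{ij}(q):=1$ if $q\le\bar p_{ij}/f_i$ and $0$ otherwise, $G(q):=\sum_j\theta_j\sum_i f_id_{ij}(\bar p^j)\delta_{ij}(q)$ and $H(q):=\sum_j\theta_j\sum_i f_id_{ij}(qf)$. Assumption A1: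 $G(q)\le H(q)$ for all $q\ge0$. *)

From HB Require Import structures.
From mathcomp Require Import all_boot all_order all_algebra.
From mathcomp Require Import reals sequences exp.
Set Implicit Arguments. Unset Strict Implicit. Unset Printing Implicit Defensive.
Import Order.TTheory GRing.Theory Num.Theory.
Local Open Scope ring_scope.

Section Pricing.
Variables (R : realType) (n m : nat).
(* demand d i j p : demand of product i by customer type j at price vector p *)
Variable d : 'I_n -> 'I_m -> ('I_n -> R) -> R.
Variable theta : 'I_m -> R.

Definition typeProfit (j : 'I_m) (p : 'I_n -> R) : R := \sum_(i < n) p i * d i j p.

Definition totProfit (p : 'I_n -> R) : R := \sum_(j < m) theta j * typeProfit j p.

Definition scalePrice (q : R) (f : 'I_n -> R) : 'I_n -> R := fun i => q * f i.

Definition inBox (qmin qmax : R) (f : 'I_n -> R) (p : 'I_n -> R) : Prop :=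
  forall i, qmin * f i <= p i <= qmax * f i.

Definition delta (f : 'I_n -> R) (pbar : 'I_m -> 'I_n -> R) (i : 'I_n) (j : 'I_m) (q : R) : R :=
  if q <= pbar j i / f i then 1 else 0.

Definition Gfun (f : 'I_n -> R) (pbar : 'I_m -> 'I_n -> R) (q : R) : R :=
  \sum_(j < m) theta j * \sum_(i < n) f i * d i j (pbar j) * delta f pbar i j q.

Definition Hfun (f : 'I_n -> R) (q : R) : R :=
  \sum_(j < m) theta j * \sum_(i < n) f i * d i j (scalePrice q f).
End Pricing.

(* Write the personalized profit as sum_(j,i) w_ji t_ji, with weights
   w_ji = theta_j f_i d_ij(pbar^j) and normalized prices t_ji = pbar_ij / f_i in
   [qmin, qmax].  The weight W(q) of the pairs with t_ji >= q is G(q) <= H(q) = R(q f) / q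
   <= R^f / q by A1, so the layer-cake formula
   sum w t = qmin W(qmin) + int_qmin^qmax W(q) dq is at most R^f (1 + ln (qmax / qmin)).
   The integral becomes an Abel summation over the finitely many values of t, where
   the step between consecutive values M < s costs (1 - M / s) R^f <= ln (s / M) R^f. *)
From HB Require Import structures.
From mathcomp Require Import all_boot all_order all_algebra.
From mathcomp Require Import reals sequences exp ring lra.
Import Order.TTheory GRing.Theory Num.Theory.
Local Open Scope ring_scope.

Lemma subr1_div_le_ln (R : realType) (x y : R) :
  0 < x -> 0 < y -> 1 - x / y <= ln (y / x).
Proof.
move=> x_gt0 y_gt0; have xy_gt0 : 0 < x / y by rewrite divr_gt0.
have := @le_ln1Dx R (x / y - 1); rewrite addrCA subrr addr0 ltrBrDl subrr.
move=> /(_ xy_gt0); rewrite -invf_div lnV ?posrE ?divr_gt0 //; lra.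
Qed.

Section LayerCake.
Variables (R : realType) (I : finType) (w t : I -> R) (a b C : R).
Hypotheses (a_gt0 : 0 < a) (a_le_b : a <= b) (w_ge0 : forall i, 0 <= w i).
Hypothesis t_in : forall i, a <= t i <= b.
Hypothesis tail_le : forall q, a <= q <= b -> q * \sum_(i | q <= t i) w i <= C.

Let C_ge0 : 0 <= C.
Proof.
have := tail_le a; rewrite lexx a_le_b => /(_ isT); apply: le_trans.
exact: mulr_ge0 (ltW a_gt0) (sumr_ge0 _ (fun i _ => w_ge0 i)).
Qed.

Lemma sum_min_le_ln s : a <= s <= b ->
  \sum_i w i * Num.min (t i) s <= C * (1 + ln (s / a)).
Proof.
(* Induction on the number of values of t below s: lower s to the largest of them. *)
have [N] := ubnP #|[pred i | t i < s]|; elim: N s => // N IHN s.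
rewrite ltnS => card_lt /andP[a_le_s s_le_b].
have s_gt0 : 0 < s by apply: lt_le_trans a_le_s.
have ln_ge0 : 0 <= ln (s / a) by rewrite ln_ge0 // ler_pdivlMr // mul1r.
case: (pickP [pred i | t i < s]) => [i0 ti0_lt | none_lt].
  have [j tj_lt tj_max] := @arg_maxP _ R I i0 [pred i | t i < s] t ti0_lt.
  set M := t _ in tj_lt tj_max; have /andP[a_le_M M_le_b] := t_in j.
  have M_gt0 : 0 < M by apply: lt_le_trans a_le_M.
  have split_min : \sum_i w i * Num.min (t i) s
      = \sum_i w i * Num.min (t i) M + (s - M) * \sum_(i | s <= t i) w i.
    rewrite mulr_sumr [X in _ + X]big_mkcond -big_split /=; apply: eq_bigr => i _.
    case: ltP => [ti_lt_s | s_le_ti].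
      by rewrite min_l ?addr0 //; apply: tj_max.
    rewrite min_r; [ring | exact: le_trans (ltW tj_lt) s_le_ti].
  have IH : \sum_i w i * Num.min (t i) M <= C * (1 + ln (M / a)).
    apply: IHN; last by rewrite a_le_M M_le_b.
    apply: leq_trans card_lt; apply: proper_card; apply/properP; split.
      by apply/subsetP => i; rewrite !inE => /lt_trans; apply.
    by exists j; rewrite !inE ?ltxx.
  have top_le : (s - M) * \sum_(i | s <= t i) w i <= C * ln (s / M).
    have -> : (s - M) * \sum_(i | s <= t i) w i
        = (1 - M / s) * (s * \sum_(i | s <= t i) w i) by field; rewrite gt_eqF.
    have tail_s : s * \sum_(i | s <= t i) w i <= C by apply: tail_le; rewrite a_le_s.
    apply: le_trans (ler_wpM2l _ tail_s) _.
      by rewrite subr_ge0 ler_pdivrMr // mul1r ltW.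
    by rewrite mulrC ler_wpM2l // subr1_div_le_ln.
  have ln_split : ln (s / a) = ln (s / M) + ln (M / a).
    by rewrite -lnM ?posrE ?divr_gt0 // mulrA divfK ?gt_eqF.
  by rewrite split_min ln_split; lra.
have all_ge i : s <= t i by rewrite leNgt; apply/negbT/none_lt.
rewrite (eq_bigr (fun i => s * w i)) => [|i _]; last by rewrite min_r // mulrC.
rewrite -mulr_sumr (eq_bigl (fun i => s <= t i)) => [|i]; last by rewrite all_ge.
apply: le_trans (tail_le s _) _; first by rewrite a_le_s.
by rewrite mulrDr mulr1 lerDl mulr_ge0.
Qed.

Lemma sum_le_ln : \sum_i w i * t i <= C * (1 + ln (b / a)).
Proof.
rewrite (eq_bigr (fun i => w i * Num.min (t i) b)) => [|i _].
  by apply: sum_min_le_ln; rewrite a_le_b lexx.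
by rewrite min_l //; case/andP: (t_in i).
Qed.

End LayerCake.

Section PricingModel.
Variables (R : realType) (n m : nat) (d : 'I_n -> 'I_m -> ('I_n -> R) -> R).
Variables (theta : 'I_m -> R) (f : 'I_n -> R).

Lemma totProfit_scalePrice q :
  totProfit d theta (scalePrice q f) = q * Hfun d theta f q.
Proof.
rewrite /Hfun mulr_sumr; apply: eq_bigr => j _.
rewrite mulrCA [q * _]mulr_sumr; congr (_ * _); apply: eq_bigr => i _.
by rewrite mulrA.
Qed.

Variable pbar : 'I_m -> 'I_n -> R.

Definition pairWeight (ji : 'I_m * 'I_n) : R :=
  theta ji.1 * (f ji.2 * d ji.2 ji.1 (pbar ji.1)).

Definition normPrice (ji : 'I_m * 'I_n) : R := pbar ji.1 ji.2 / f ji.2.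

Lemma sum_typeProfit_pairs : (forall i, f i != 0) ->
  \sum_j theta j * typeProfit d j (pbar j) = \sum_ji pairWeight ji * normPrice ji.
Proof.
move=> f_neq0.
rewrite -(pair_bigA _ (fun j i => pairWeight (j, i) * normPrice (j, i))).
apply: eq_bigr => j _ /=.
rewrite mulr_sumr; apply: eq_bigr => i _.
by rewrite /pairWeight /normPrice /=; field; apply: f_neq0.
Qed.

Lemma Gfun_tail_weight q :
  Gfun d theta f pbar q = \sum_(ji | q <= normPrice ji) pairWeight ji.
Proof.
rewrite big_mkcond /=.
rewrite -(pair_bigA _ (fun j i => if q <= normPrice (j, i) then pairWeight (j, i) else 0)).
apply: eq_bigr => j _ /=.
rewrite mulr_sumr; apply: eq_bigr => i _.
by rewrite /delta /normPrice /pairWeight /=; case: ifP; rewrite ?mulr1 ?mulr0 ?mulrA.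
Qed.

End PricingModel.

Theorem corollary1 (R : realType) (n m : nat)
    (d : 'I_n -> 'I_m -> ('I_n -> R) -> R) (theta : 'I_m -> R)
    (f : 'I_n -> R) (qmin qmax k : R) (pbar : 'I_m -> 'I_n -> R) (Rf : R) :
  (* non-negative demand at non-negative prices *)
  (forall i j (p : 'I_n -> R), (forall l, 0 <= p l) -> 0 <= d i j p) ->
  (* weights *)
  (forall j, 0 < theta j) -> \sum_(j < m) theta j = 1 ->
  (* positive vector f, price bounds *)
  (forall i, 0 < f i) -> 0 < qmin -> 0 < k -> qmax = expR k * qmin ->
  (* A0: pbar^j is a maximizer of R_j over P with positive components *)
  (forall j, inBox qmin qmax f (pbar j)) ->
  (forall j i, 0 < pbar j i) ->
  (forall j (p : 'I_n -> R), inBox qmin qmax f p ->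
      typeProfit d j p <= typeProfit d j (pbar j)) ->
  (* A1 *)
  (forall q, 0 <= q -> Gfun d theta f pbar q <= Hfun d theta f q) ->
  (* Rf = max_{q in [qmin, qmax]} R(q f) *)
  (exists2 q, qmin <= q <= qmax & totProfit d theta (scalePrice q f) = Rf) ->
  (forall q, qmin <= q <= qmax -> totProfit d theta (scalePrice q f) <= Rf) ->
  (* conclusion: Rbar = sum_j theta_j R*_j <= (1 + k) R^f *)
  \sum_(j < m) theta j * typeProfit d j (pbar j) <= (1 + k) * Rf.
Proof.
move=> d_ge0 theta_gt0 _ f_gt0 qmin_gt0 k_gt0 -> pbar_in _ _ A1 _ Rf_max.
have qmin_le_qmax : qmin <= expR k * qmin.
  by rewrite ler_peMl ?(ltW qmin_gt0) // ltW // pexpR_gt1.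
rewrite (@sum_typeProfit_pairs _ _ _ d theta f) => [|i]; last by rewrite gt_eqF.
rewrite mulrC -[k](expRK k) -[expR k](mulfK (_ : qmin != 0)) ?gt_eqF //.
apply: sum_le_ln => //.
- move=> [j i]; have pbar_ge0 l : 0 <= pbar j l.
    have /andP[+ _] := pbar_in j l; apply: le_trans.
    exact: mulr_ge0 (ltW qmin_gt0) (ltW (f_gt0 l)).
  by rewrite /pairWeight /= !mulr_ge0 ?(d_ge0 _ _ _ pbar_ge0) ?(ltW (theta_gt0 j)) ?(ltW (f_gt0 i)).
- move=> [j i]; rewrite /normPrice /=; have /andP[lo hi] := pbar_in j i.
  by rewrite ler_pdivlMr // ler_pdivrMr // lo hi.
- move=> q q_in; have q_ge0 : 0 <= q.
    by case/andP: q_in => + _; apply: le_trans; exact: ltW.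
  rewrite -Gfun_tail_weight; apply: le_trans (ler_wpM2l q_ge0 (A1 q q_ge0)) _.
  by rewrite -totProfit_scalePrice Rf_max.
Qed.
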